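(* Assume (P0), (P1), (P3), (P4) and (P5). Let $(\alpha,0,\beta)\in\partial\mathcal D$, $\mu\in[0,1]$ and $s\in(r,R)$. Then the problem $$\beta\dot u=A(\alpha)u+\mu f(\alpha,u),\qquad u(0)=u(2\pi),$$ has no $C^1$ solution $u$ with symmetry at least $H^\varphi$ and $\|u\|_C=s$. Equivalently, let $\mathfrak W=C^{H^\varphi}$, let $\Omega=\mathcal D\times B_R(0)$ with $B_R(0)=\{u\in\mathfrak W:\|u\|_C<R\}$, and let $F(\alpha,u)(t)=f(\alpha,u(t))$. Then for every such $\mu$ and $s$, the equation $\big(\|u\|_C-s,\ u-\mu(\beta L-A(\alpha))^{-1}F(\alpha,u)\big)=0$ has no solution on $\partial\Omega$.
   Context: Let $\Gamma$ be a finite group and $V=\mathbb R^N$ an orthogonal $\Gamma$-representation with norm $|\cdot|$. Let $\alpha_-<\alpha_+$. Let $A:[\alpha_-,\alpha_+]\to L^\Gamma(V;V)$ be a curve of $\Gamma$-equivariant linear maps, and $f:[\alpha_-,\alpha_+]\times V\to V$ a map with $f(\alpha,gx)=gf(\alpha,x)$ for all $g\in\Gamma$. Let $C=C(S^1;V)$ be the space of continuous $2\pi$-periodic $V$-valued functions with sup norm $\|\cdot\|_C$. Let $L=d/dt$. Twisted subgroup: $H\le\Gamma$ and $\varphi:H\to\mathbb R/\mathbb Z$ is a homomorphism. A $2\pi$-periodic $u$ has symmetry at least $H^\varphi$ if $h\,u(t-2\pi\varphi(h))=u(t)$ for all $h\in H$ and all $t$. $C^{H^\varphi}$ denotes the subspace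 of such functions. Let $V^H$ be the $H$-fixed subspace. For $l\ge1$ put ${}^l\widetilde V^{H^\varphi}=\{v\in\mathbb C^N:e^{-2\pi il\varphi(h)}hv=v\ \forall h\in H\}$, with $\Gamma$ acting complex-linearly on $\mathbb C^N$. For $l\ge1$, $\Delta_l^{H^\varphi}(\alpha,\tau,\beta)$ is the restriction of $l(\tau+i\beta)\mathrm{Id}-A(\alpha)$ to ${}^l\widetilde V^{H^\varphi}$, and $\Lambda_l^{H^\varphi}=\det_{\mathbb C}\Delta_l^{H^\varphi}$. Also $\Delta_0^{H^\varphi}=-A(\alpha)|_{V^H}$ and $\Lambda_0^{H^\varphi}(\alpha,\tau,\beta)=\det_{\mathbb R}(A(\alpha)|_{V^H})$. Put $M^{H^\varphi}(\alpha,\beta)=\big(\sum_{l\ge0}|(\Delta_l^{H^\varphi}(\alpha,0,\beta))^{-1}|^2\big)^{1/2}$, where $|\cdot|$ is the induced operator norm. Conditions: (P0) $A$ and $f$ are continuous. (P1) $\Lambda_0^{H^\varphi}(\alpha,0,0)\ne0$ for all $\alpha$. (P3) $\mathcal D$ is an open subset of the plane $[\alpha_-,\alpha_+]\times\{0\}\times[0,\infty)$ (coordinates $(\alpha,\tau,\beta)$), with $\overline{\mathcal D}$ homeomorphic to a closed disk, and $\Lambda_l^{H^\varphi}(\alpha,0,\beta)\ne0$ for all $l\in\mathbb N$ and all $(\alpha,0,\beta)\in\partial\mathcal D$ (boundary relative to the plane). $\mathcal D$ is identified with a subset of the $(\alpha,\beta)$-plane, and $\overline{\mathcal D}\subset\{\beta>0\}$.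 (The paper's (P3) also contains condition (ii): $(\Lambda_1^{H^\varphi})^{-1}(0)\cap\overline{\mathcal D}=(\Lambda_1^{H^\varphi})^{-1}(0)\cap\mathcal P_0$, which refers to the set $\mathcal P$ of (P2); it is not used in this lemma.) (P4) There are $N:[\alpha_-,\alpha_+]\to[0,\infty)$ and $0\le r<R$ with $|f(\alpha,x)|\le N(\alpha)\max\{r,|x|\}$ for all $|x|\le R$. (P5) $N(\alpha)<1/(\sqrt{2\pi}M^{H^\varphi}(\alpha,\beta))$ for all $(\alpha,0,\beta)\in\partial\mathcal D$. Under (P1) and (P3)(iii), $\beta L-A(\alpha):(C^1)^{H^\varphi}\to C^{H^\varphi}$ is invertible for $(\alpha,\beta)\in\partial\mathcal D$. *)

From Stdlib Require Import Reals.
From mathcomp Require Import all_boot all_fingroup.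
Set Implicit Arguments. Unset Strict Implicit. Unset Printing Implicit Defensive.
Local Open Scope R_scope.

Definition vec (N : nat) := 'I_N -> R.
Definition mat (N : nat) := 'I_N -> 'I_N -> R.

Definition sumI (N : nat) (F : 'I_N -> R) : R := foldr Rplus 0 (map F (enum 'I_N)).

Definition mv (N : nat) (M : mat N) (v : vec N) : vec N :=
  fun i => sumI (fun j => M i j * v j).
Definition mm (N : nat) (M1 M2 : mat N) : mat N :=
  fun i k => sumI (fun j => M1 i j * M2 j k).
Definition idm (N : nat) : mat N := fun i j => if i == j then 1 else 0.
Definition trm (N : nat) (M : mat N) : mat N := fun i j => M j i.

Definition vsub (N : nat) (u v : vec N) : vec N := fun i => u i - v i.
Definition vnorm (N : nat) (v : vec N) : R := sqrt (sumI (fun i => v i ^ 2)).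

Definition orth_rep (gT : finGroupType) (N : nat) (rho : gT -> mat N) : Prop :=
  rho 1%g = @idm N /\
  (forall g h : gT, rho (g * h)%g = mm (rho g) (rho h)) /\
  (forall g : gT, mm (trm (rho g)) (rho g) = @idm N).

(* phi : H -> R/Z homomorphism, represented by real representatives *)
Definition twist_hom (gT : finGroupType) (H : {group gT}) (phi : gT -> R) : Prop :=
  forall g h : gT, g \in H -> h \in H ->
    exists k : Z, phi (g * h)%g = phi g + phi h + IZR k.

Definition fixH (gT : finGroupType) (N : nat) (rho : gT -> mat N) (H : {group gT})
  (v : vec N) : Prop :=
  forall h : gT, h \in H -> forall i, mv (rho h) v i = v i.

(* ---------- complexification C^N, vectors as pairs (x, y) = x + i y ---------- *)
Definition cvec (N : nat) := (vec N * vec N)%type.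
Definition cnorm (N : nat) (v : cvec N) : R :=
  sqrt (sumI (fun i => (fst v) i ^ 2 + (snd v) i ^ 2)).

(* ^l V~^{H^phi} = { v in C^N : e^{-2 pi i l phi(h)} h v = v  for all h in H } *)
Definition twisted_space (gT : finGroupType) (N : nat) (rho : gT -> mat N)
  (H : {group gT}) (phi : gT -> R) (l : nat) (v : cvec N) : Prop :=
  forall h : gT, h \in H ->
    let th := 2 * PI * INR l * phi h in
    let hx := mv (rho h) (fst v) in
    let hy := mv (rho h) (snd v) in
    forall i, cos th * hx i + sin th * hy i = (fst v) i /\
              cos th * hy i - sin th * hx i = (snd v) i.

(* Delta_l(alpha,0,beta) v = l (i beta) v - A(alpha) v  on C^N *)
Definition Delta_c (N : nat) (Aa : mat N) (l : nat) (beta : R) (v : cvec N) : cvec N :=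
  (fun i => - (INR l * beta) * (snd v) i - mv Aa (fst v) i,
   fun i => (INR l * beta) * (fst v) i - mv Aa (snd v) i).

(* "K = |T^{-1}|": the operator norm of the inverse of T restricted to W,
   i.e. the least K >= 0 with |v| <= K |T v| for all v in W. *)
Definition inv_opnorm (X : Type) (nrm : X -> R) (W : X -> Prop) (T : X -> X) (K : R)
  : Prop :=
  0 <= K /\
  (forall v, W v -> nrm v <= K * nrm (T v)) /\
  (forall K', 0 <= K' -> (forall v, W v -> nrm v <= K' * nrm (T v)) -> K <= K').

(* Lambda_0 = det_R (A(alpha)|_{V^H}) <> 0 *)
Definition Lambda0_nonzero (gT : finGroupType) (N : nat) (rho : gT -> mat N)
  (H : {group gT}) (Aa : mat N) : Prop :=
  forall v : vec N, fixH rho H v -> (forall i, mv Aa v i = 0) -> forall i, v i = 0.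

(* Lambda_l(alpha,0,beta) = det_C (Delta_l(alpha,0,beta)|_{^l V~^{H^phi}}) <> 0, l >= 1 *)
Definition Lambda_nonzero (gT : finGroupType) (N : nat) (rho : gT -> mat N)
  (H : {group gT}) (phi : gT -> R) (Aa : mat N) (l : nat) (beta : R) : Prop :=
  forall v : cvec N, twisted_space rho H phi l v ->
    (forall i, fst (Delta_c Aa l beta v) i = 0 /\ snd (Delta_c Aa l beta v) i = 0) ->
    forall i, fst v i = 0 /\ snd v i = 0.

Definition dist2 (p q : R * R) : R := (fst p - fst q) ^ 2 + (snd p - snd q) ^ 2.

Definition closure2 (D : R -> R -> Prop) (a b : R) : Prop :=
  forall eps, 0 < eps -> exists a' b', D a' b' /\ dist2 (a, b) (a', b') < eps ^ 2.

(* boundary relative to the (closed) plane P = [am,ap] x [0,oo): for D relatively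
   open in P it is closure(D) \ D *)
Definition boundary2 (D : R -> R -> Prop) (a b : R) : Prop :=
  closure2 D a b /\ ~ D a b.

Definition cont_on2 (S : R * R -> Prop) (F : R * R -> R * R) : Prop :=
  forall p, S p -> forall eps, 0 < eps -> exists delta, 0 < delta /\
    forall q, S q -> dist2 p q < delta ^ 2 -> dist2 (F p) (F q) < eps ^ 2.

Definition homeomorphic2 (S T : R * R -> Prop) : Prop :=
  exists (F G : R * R -> R * R),
    (forall p, S p -> T (F p)) /\ (forall q, T q -> S (G q)) /\
    (forall p, S p -> G (F p) = p) /\ (forall q, T q -> F (G q) = q) /\
    cont_on2 S F /\ cont_on2 T G.

Definition closed_disk (p : R * R) : Prop := fst p ^ 2 + snd p ^ 2 <= 1.

(* Let u be a solution and expand u and the residual g := beta u' - A(alpha) u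
   = mu f(alpha, u) in Fourier series.  The l-th coefficient of g is Delta_l
   applied to the l-th coefficient of u, and the symmetry of u puts that
   coefficient in the twisted space, so |c_l(u)| <= K_l |c_l(g)| with
   K_l = |Delta_l^{-1}|.  Bessel's inequality bounds the coefficients of g by
   sup |g| <= N(alpha) s, and Cauchy-Schwarz then bounds
   |c_0(u)| + 2 sum_l |c_l(u)| by sqrt 2 M(alpha, beta) N(alpha) s, which is
   < s by (P5).  Finally this sum of coefficient norms dominates sup |u| = s:
   convolving with the positive kernels ((1 + cos)/2)^n, which are cosine
   polynomials of degree n, sees only the Fourier partial sums of u, and
   these kernels concentrate at 0. *)

From Stdlib Require Import Reals Lra Lia List.
From Coquelicot Require Import Coquelicot.
Local Open Scope R_scope.

(** * Finite sums *)

Definition lsum {A : Type} (l : list A) (F : A -> R) : R := fold_right Rplus 0 (map F l).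
Arguments lsum {A} !l F /.

Lemma lsum_cons {A} (x : A) l F : lsum (x :: l) F = F x + lsum l F.
Proof. reflexivity. Qed.

Lemma lsum_ext {A} (l : list A) F G : (forall x, In x l -> F x = G x) -> lsum l F = lsum l G.
Proof.
  induction l as [|y l IH]; intros E; [reflexivity|].
  rewrite !lsum_cons. f_equal; [apply E; simpl; auto | apply IH; intros; apply E; simpl; auto].
Qed.

Lemma lsum_plus {A} (l : list A) F G : lsum l (fun x => F x + G x) = lsum l F + lsum l G.
Proof. induction l; [simpl; ring|]. rewrite !lsum_cons, IHl; ring. Qed.

Lemma lsum_scal {A} (l : list A) c F : lsum l (fun x => c * F x) = c * lsum l F.
Proof. induction l; [simpl; ring|]. rewrite !lsum_cons, IHl; ring. Qed.

Lemma lsum_opp {A} (l : list A) F : lsum l (fun x => - F x) = - lsum l F.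
Proof. induction l; [simpl; ring|]. rewrite !lsum_cons, IHl; ring. Qed.

Lemma lsum_mulr {A} (l : list A) F c : lsum l F * c = lsum l (fun x => F x * c).
Proof. rewrite Rmult_comm, <- lsum_scal. apply lsum_ext. intros; ring. Qed.

Lemma lsum_zero {A} (l : list A) : lsum l (fun _ => 0) = 0.
Proof. induction l; [reflexivity|]. rewrite lsum_cons, IHl; ring. Qed.

Lemma lsum_le {A} (l : list A) F G : (forall x, In x l -> F x <= G x) -> lsum l F <= lsum l G.
Proof.
  induction l; intros E; [simpl; lra|]. rewrite !lsum_cons.
  apply Rplus_le_compat; [apply E; simpl; auto | apply IHl; intros; apply E; simpl; auto].
Qed.

Lemma lsum_nonneg {A} (l : list A) F : (forall x, In x l -> 0 <= F x) -> 0 <= lsum l F.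
Proof. intros H. rewrite <- (lsum_zero l). apply lsum_le; auto. Qed.

Lemma lsum_abs {A} (l : list A) F : Rabs (lsum l F) <= lsum l (fun x => Rabs (F x)).
Proof.
  induction l; [simpl; rewrite Rabs_R0; lra|]. rewrite !lsum_cons.
  eapply Rle_trans; [apply Rabs_triang | lra].
Qed.

Lemma lsum_swap {A B} (l1 : list A) (l2 : list B) (F : A -> B -> R) :
  lsum l1 (fun x => lsum l2 (fun y => F x y)) = lsum l2 (fun y => lsum l1 (fun x => F x y)).
Proof.
  induction l1 as [|x l1 IH]; [symmetry; apply lsum_zero|].
  rewrite lsum_cons, IH, <- lsum_plus. apply lsum_ext. intros; reflexivity.
Qed.

Lemma lsum_delta l m F c : NoDup l -> In m l ->
  lsum l (fun j => F j * (if Nat.eqb j m then c else 0)) = F m * c.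
Proof.
  induction l as [|x l IH]; intros Hnd Hin; [inversion Hin|].
  rewrite lsum_cons. inversion Hnd; subst. destruct Hin as [E|Hin].
  - subst. rewrite Nat.eqb_refl, (lsum_ext _ _ (fun _ => 0)), lsum_zero; [ring|].
    intros y Hy. replace (Nat.eqb y m) with false; [ring|].
    symmetry. apply Nat.eqb_neq. intros ->. auto.
  - rewrite IH; auto. replace (Nat.eqb x m) with false; [ring|].
    symmetry. apply Nat.eqb_neq. intros ->. auto.
Qed.

Lemma lsum_delta_notin l m F c : ~ In m l ->
  lsum l (fun j => F j * (if Nat.eqb j m then c else 0)) = 0.
Proof.
  intros H. rewrite (lsum_ext _ _ (fun _ => 0)); [apply lsum_zero|].
  intros x Hx. replace (Nat.eqb x m) with false; [ring|].
  symmetry. apply Nat.eqb_neq. intros ->. auto.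
Qed.

Lemma lsum_seq_sum_f_R0 F n k :
  lsum (seq k (S n)) F = sum_f_R0 (fun j => F (k + j)%nat) n.
Proof.
  revert k. induction n; intros k.
  - simpl. rewrite Nat.add_0_r. ring.
  - change (seq k (S (S n))) with (k :: seq (S k) (S n)). rewrite lsum_cons, IHn.
    rewrite (decomp_sum (fun j => F (k + j)%nat) (S n)) by lia. simpl pred.
    rewrite Nat.add_0_r. f_equal. apply sum_eq. intros; f_equal; lia.
Qed.

Lemma lsum_Cauchy_Schwarz {A} (l : list A) F G :
  Rabs (lsum l (fun x => F x * G x)) <=
  sqrt (lsum l (fun x => F x ^ 2)) * sqrt (lsum l (fun x => G x ^ 2)).
Proof.
  set (a := lsum l (fun x => F x ^ 2)). set (b := lsum l (fun x => G x ^ 2)).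
  set (c := lsum l (fun x => F x * G x)).
  assert (Ha : 0 <= a) by (apply lsum_nonneg; intros; apply pow2_ge_0).
  assert (Hb : 0 <= b) by (apply lsum_nonneg; intros; apply pow2_ge_0).
  (* the discriminant of the nonnegative quadratic lam |-> sum (F - lam G)^2 *)
  assert (Q : forall lam, 0 <= a - 2 * lam * c + lam ^ 2 * b).
  { intros lam. replace (a - 2 * lam * c + lam ^ 2 * b) with (lsum l (fun x => (F x - lam * G x) ^ 2)).
    - apply lsum_nonneg; intros; apply pow2_ge_0.
    - unfold a, b, c. rewrite (lsum_ext _ _ (fun x => F x ^ 2 + ((-2 * lam) * (F x * G x) + lam ^ 2 * G x ^ 2)))
        by (intros; ring).
      rewrite !lsum_plus, !lsum_scal. ring. }
  assert (Hc2 : c ^ 2 <= a * b).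
  { destruct (Req_dec b 0) as [Hb0|Hb0].
    - destruct (Req_dec c 0) as [Hc0|Hc0]; [rewrite Hc0, Hb0; lra|].
      specialize (Q ((a + 1) / c)). rewrite Hb0 in Q.
      replace (a - 2 * ((a + 1) / c) * c + ((a + 1) / c) ^ 2 * 0) with (- a - 2) in Q by (field; auto).
      lra.
    - specialize (Q (c / b)).
      replace (a - 2 * (c / b) * c + (c / b) ^ 2 * b) with (a - c ^ 2 / b) in Q by (field; auto).
      apply (Rmult_le_reg_r (/ b)); [apply Rinv_0_lt_compat; lra|].
      replace (a * b * / b) with a by (field; auto). unfold Rdiv in Q. lra. }
  rewrite <- sqrt_mult by auto. rewrite <- sqrt_Rsqr_abs. apply sqrt_le_1_alt.
  unfold Rsqr. lra.
Qed.

(** * Continuous functions and their integrals *)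

Definition Rcont (f : R -> R) : Prop := forall x, continuous f x.

Lemma Rcont_ext f g : (forall x, f x = g x) -> Rcont f -> Rcont g.
Proof. intros E Hf x. exact (continuous_ext f g x E (Hf x)). Qed.

Lemma Rcont_const c : Rcont (fun _ => c).
Proof. intros x. apply continuous_const. Qed.

Lemma Rcont_id : Rcont (fun x => x).
Proof. intros x. apply continuous_id. Qed.

Lemma Rcont_plus f g : Rcont f -> Rcont g -> Rcont (fun x => f x + g x).
Proof. intros Hf Hg x. exact (continuous_plus f g x (Hf x) (Hg x)). Qed.

Lemma Rcont_mult f g : Rcont f -> Rcont g -> Rcont (fun x => f x * g x).
Proof. intros Hf Hg x. exact (continuous_mult f g x (Hf x) (Hg x)). Qed.

Lemma Rcont_comp f g : Rcont f -> Rcont g -> Rcont (fun x => g (f x)).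
Proof. intros Hf Hg x. exact (continuous_comp f g x (Hf x) (Hg (f x))). Qed.

Lemma Rcont_scal c f : Rcont f -> Rcont (fun x => c * f x).
Proof. intros Hf. apply Rcont_mult; [apply Rcont_const | exact Hf]. Qed.

Lemma Rcont_opp f : Rcont f -> Rcont (fun x => - f x).
Proof. intros Hf. apply (Rcont_ext (fun x => (-1) * f x)); [intros; ring | now apply Rcont_scal]. Qed.

Lemma Rcont_minus f g : Rcont f -> Rcont g -> Rcont (fun x => f x - g x).
Proof. intros Hf Hg. apply Rcont_plus; [|apply Rcont_opp]; auto. Qed.

Lemma Rcont_pow f n : Rcont f -> Rcont (fun x => f x ^ n).
Proof. intros Hf. induction n; simpl; [apply Rcont_const | apply Rcont_mult; auto]. Qed.

Lemma Rcont_abs f : Rcont f -> Rcont (fun x => Rabs (f x)).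
Proof. intros Hf. apply (Rcont_comp f Rabs); auto. intros x. apply continuous_Rabs. Qed.

Lemma Rcont_cos f : Rcont f -> Rcont (fun x => cos (f x)).
Proof. intros Hf. apply (Rcont_comp f cos); auto. intros x. apply continuous_cos. Qed.

Lemma Rcont_sin f : Rcont f -> Rcont (fun x => sin (f x)).
Proof. intros Hf. apply (Rcont_comp f sin); auto. intros x. apply continuous_sin. Qed.

Lemma Rcont_cos_mul k : Rcont (fun t => cos (k * t)).
Proof. apply Rcont_cos, Rcont_scal, Rcont_id. Qed.

Lemma Rcont_sin_mul k : Rcont (fun t => sin (k * t)).
Proof. apply Rcont_sin, Rcont_scal, Rcont_id. Qed.

Lemma Rcont_shift f v : Rcont f -> Rcont (fun x => f (x + v)).
Proof. intros Hf. apply (Rcont_comp (fun x => x + v) f); auto. apply Rcont_plus; [apply Rcont_id | apply Rcont_const]. Qed.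

Lemma Rcont_lsum {A} (l : list A) (F : A -> R -> R) :
  (forall x, Rcont (F x)) -> Rcont (fun t => lsum l (fun x => F x t)).
Proof.
  intros H. induction l as [|x l IH].
  - apply (Rcont_ext (fun _ => 0)); [reflexivity | apply Rcont_const].
  - apply (Rcont_ext (fun t => F x t + lsum l (fun y => F y t))); [reflexivity | now apply Rcont_plus].
Qed.

Lemma Rcont_continuity_pt f x : Rcont f -> continuity_pt f x.
Proof. intros H. apply continuity_pt_filterlim. apply H. Qed.

Lemma Rcont_eps f x eps : Rcont f -> 0 < eps ->
  exists del, 0 < del /\ forall y, Rabs (y - x) < del -> Rabs (f y - f x) < eps.
Proof.
  intros Hf He. destruct (Rcont_continuity_pt f x Hf eps He) as [del [Hdel Hc]].
  exists del. split; auto. intros y Hy.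
  destruct (Req_dec y x) as [->|E]; [rewrite Rminus_diag, Rabs_R0; auto|].
  apply (Hc y). repeat split; auto.
Qed.

Create HintDb Rcont_db.

Ltac solve_Rcont := cbv beta; match goal with
  | |- Rcont (fun _ => ?c) => apply Rcont_const
  | |- Rcont (fun x => x) => apply Rcont_id
  | |- Rcont (fun _ => _ + _) => apply Rcont_plus; solve_Rcont
  | |- Rcont (fun _ => _ - _) => apply Rcont_minus; solve_Rcont
  | |- Rcont (fun _ => - _) => apply Rcont_opp; solve_Rcont
  | |- Rcont (fun _ => _ * _) => apply Rcont_mult; solve_Rcont
  | |- Rcont (fun t => cos (?k * t)) => apply Rcont_cos_mul
  | |- Rcont (fun t => sin (?k * t)) => apply Rcont_sin_mul
  | |- Rcont (fun _ => cos _) => apply Rcont_cos; solve_Rcont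
  | |- Rcont (fun _ => sin _) => apply Rcont_sin; solve_Rcont
  | |- Rcont (fun _ => _ ^ _) => apply Rcont_pow; solve_Rcont
  | |- Rcont (fun _ => Rabs _) => apply Rcont_abs; solve_Rcont
  | |- Rcont (fun _ => lsum _ _) => apply Rcont_lsum; solve_Rcont
  | |- Rcont (fun t => ?p (t + _)) => apply Rcont_shift; solve_Rcont
  | |- Rcont _ => first [assumption | solve [eauto with Rcont_db]]
  | |- forall _, _ => intro; solve_Rcont
  end.

(* [RInt] at the real line, so that its rules can be stated with [Rplus], [Rmult]. *)
Definition integral (f : R -> R) (a b : R) : R := @RInt R_CompleteNormedModule f a b.

Lemma ex_integral f a b : Rcont f -> ex_RInt f a b.
Proof. intros Hf. apply (@ex_RInt_continuous R_CompleteNormedModule). intros; apply Hf. Qed.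

Lemma integral_ext f g a b : (forall x, f x = g x) -> integral f a b = integral g a b.
Proof. intros E. apply RInt_ext. intros; apply E. Qed.

Lemma integral_plus f g a b : Rcont f -> Rcont g ->
  integral (fun x => f x + g x) a b = integral f a b + integral g a b.
Proof. intros Hf Hg. exact (RInt_plus f g a b (ex_integral f a b Hf) (ex_integral g a b Hg)). Qed.

Lemma integral_minus f g a b : Rcont f -> Rcont g ->
  integral (fun x => f x - g x) a b = integral f a b - integral g a b.
Proof. intros Hf Hg. exact (RInt_minus f g a b (ex_integral f a b Hf) (ex_integral g a b Hg)). Qed.

Lemma integral_scal f c a b : Rcont f -> integral (fun x => c * f x) a b = c * integral f a b.
Proof. intros Hf. exact (RInt_scal f a b c (ex_integral f a b Hf)). Qed.

Lemma integral_opp f a b : Rcont f -> integral (fun x => - f x) a b = - integral f a b.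
Proof. intros Hf. exact (RInt_opp f a b (ex_integral f a b Hf)). Qed.

Lemma integral_lin2 f g al be a b : Rcont f -> Rcont g ->
  integral (fun t => al * f t + be * g t) a b = al * integral f a b + be * integral g a b.
Proof. intros Hf Hg. rewrite integral_plus by solve_Rcont. rewrite !integral_scal; auto. Qed.

Lemma integral_Chasles f a b c : Rcont f -> integral f a b + integral f b c = integral f a c.
Proof. intros Hf. exact (RInt_Chasles f a b c (ex_integral f a b Hf) (ex_integral f b c Hf)). Qed.

Lemma integral_swap f a b : Rcont f -> integral f b a = - integral f a b.
Proof. intros Hf. unfold integral. rewrite <- (opp_RInt_swap f a b (ex_integral f a b Hf)). reflexivity. Qed.

Lemma integral_const c a b : integral (fun _ => c) a b = c * (b - a).
Proof. unfold integral. rewrite RInt_const. cbn. unfold mult. simpl. ring. Qed.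

Lemma integral_shift f v a b : Rcont f ->
  integral (fun y => f (y + v)) a b = integral f (a + v) (b + v).
Proof.
  intros Hf. unfold integral. rewrite <- (Rmult_1_l a) at 2. rewrite <- (Rmult_1_l b) at 2.
  rewrite <- (RInt_comp_lin f 1 v a b) by (apply ex_integral; auto).
  apply integral_ext. intros x. cbn. unfold mult. simpl. rewrite !Rmult_1_l. reflexivity.
Qed.

Lemma integral_le f g a b : a <= b -> Rcont f -> Rcont g ->
  (forall x, a <= x <= b -> f x <= g x) -> integral f a b <= integral g a b.
Proof. intros Hab Hf Hg Hle. apply RInt_le; auto; try apply ex_integral; auto. intros; apply Hle; lra. Qed.

Lemma integral_ge0 f a b : a <= b -> Rcont f -> (forall x, a <= x <= b -> 0 <= f x) ->
  0 <= integral f a b.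
Proof.
  intros Hab Hf H. replace 0 with (integral (fun _ => 0) a b) at 1 by (rewrite integral_const; ring).
  apply integral_le; auto. apply Rcont_const.
Qed.

Lemma integral_abs f a b : a <= b -> Rcont f ->
  Rabs (integral f a b) <= integral (fun t => Rabs (f t)) a b.
Proof. intros Hab Hf. apply abs_RInt_le; auto. apply ex_integral; auto. Qed.

Lemma integral_derive F f a b : (forall x, is_derive F x (f x)) -> Rcont f ->
  integral f a b = F b - F a.
Proof. intros HF Hf. apply is_RInt_unique. apply (is_RInt_derive F f a b); intros; auto. Qed.

Lemma integral_lsum {A} (l : list A) (F : A -> R -> R) a b : (forall x, Rcont (F x)) ->
  integral (fun t => lsum l (fun x => F x t)) a b = lsum l (fun x => integral (F x) a b).
Proof.
  intros H. induction l as [|x l IH].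
  - simpl. rewrite integral_const. ring.
  - rewrite lsum_cons, <- IH, <- integral_plus; auto. apply Rcont_lsum; auto.
Qed.

Lemma integral_periodic f c : Rcont f -> (forall t, f (t + 2 * PI) = f t) ->
  integral f c (c + 2 * PI) = integral f 0 (2 * PI).
Proof.
  intros Hf Hp.
  rewrite <- (integral_Chasles f c 0 (c + 2 * PI)) by auto.
  rewrite <- (integral_Chasles f 0 (2 * PI) (c + 2 * PI)) by auto.
  replace (integral f (2 * PI) (c + 2 * PI)) with (integral f 0 c); [rewrite (integral_swap f 0 c) by auto; ring|].
  replace (2 * PI) with (0 + 2 * PI) at 1 by ring.
  rewrite <- integral_shift by auto. apply integral_ext. intros; rewrite Hp; auto.
Qed.

(** * Fourier coefficients *)

Lemma two_PI_pos : 0 < 2 * PI.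
Proof. pose proof PI_RGT_0. lra. Qed.

Lemma sin_nat_2PI k : sin (INR k * (2 * PI)) = 0.
Proof. replace (INR k * (2 * PI)) with (0 + 2 * INR k * PI) by ring. rewrite sin_period. apply sin_0. Qed.

Lemma cos_nat_2PI k : cos (INR k * (2 * PI)) = 1.
Proof. replace (INR k * (2 * PI)) with (0 + 2 * INR k * PI) by ring. rewrite cos_period. apply cos_0. Qed.

Lemma cos_nat_periodic k t : cos (INR k * (t + 2 * PI)) = cos (INR k * t).
Proof. replace (INR k * (t + 2 * PI)) with (INR k * t + 2 * INR k * PI) by ring. apply cos_period. Qed.

Lemma sin_nat_periodic k t : sin (INR k * (t + 2 * PI)) = sin (INR k * t).
Proof. replace (INR k * (t + 2 * PI)) with (INR k * t + 2 * INR k * PI) by ring. apply sin_period. Qed.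

Lemma is_derive_cos_mul l t : is_derive (fun t => cos (l * t)) t (- l * sin (l * t)).
Proof. auto_derive; [trivial | ring]. Qed.

Lemma is_derive_sin_mul l t : is_derive (fun t => sin (l * t)) t (l * cos (l * t)).
Proof. auto_derive; [trivial | ring]. Qed.

Lemma integral_cos_nat k : (1 <= k)%nat -> integral (fun t => cos (INR k * t)) 0 (2 * PI) = 0.
Proof.
  intros Hk. assert (Hk' : INR k <> 0) by (apply not_0_INR; lia).
  rewrite (integral_derive (fun t => / INR k * sin (INR k * t))).
  - rewrite sin_nat_2PI, Rmult_0_r, Rmult_0_r, sin_0. ring.
  - intros x. replace (cos (INR k * x)) with (/ INR k * (INR k * cos (INR k * x))) by (field; auto).
    apply (is_derive_scal (fun t => sin (INR k * t))), is_derive_sin_mul.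
  - solve_Rcont.
Qed.

Lemma integral_sin_nat k : integral (fun t => sin (INR k * t)) 0 (2 * PI) = 0.
Proof.
  destruct k as [|k].
  - rewrite (integral_ext _ (fun _ => 0)), integral_const; [ring|].
    intros; simpl. rewrite Rmult_0_l. apply sin_0.
  - assert (Hk' : INR (S k) <> 0) by (apply not_0_INR; lia).
    rewrite (integral_derive (fun t => - / INR (S k) * cos (INR (S k) * t))).
    + rewrite cos_nat_2PI, Rmult_0_r, cos_0. ring.
    + intros x. replace (sin (INR (S k) * x)) with (- / INR (S k) * (- INR (S k) * sin (INR (S k) * x)))
        by (field; auto).
      apply (is_derive_scal (fun t => cos (INR (S k) * t))), is_derive_cos_mul.
    + solve_Rcont.
Qed.

Lemma integral_cos_diff j m : integral (fun t => cos ((INR j - INR m) * t)) 0 (2 * PI) =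
  if Nat.eqb j m then 2 * PI else 0.
Proof.
  destruct (Nat.lt_total j m) as [Hlt|[Heq|Hgt]].
  - replace (Nat.eqb j m) with false by (symmetry; apply Nat.eqb_neq; lia).
    rewrite (integral_ext _ (fun t => cos (INR (m - j) * t))); [apply integral_cos_nat; lia|].
    intros t. rewrite minus_INR by lia. rewrite <- cos_neg. f_equal; ring.
  - subst. rewrite Nat.eqb_refl, (integral_ext _ (fun _ => 1)), integral_const; [ring|].
    intros t. rewrite Rminus_diag, Rmult_0_l. apply cos_0.
  - replace (Nat.eqb j m) with false by (symmetry; apply Nat.eqb_neq; lia).
    rewrite (integral_ext _ (fun t => cos (INR (j - m) * t))); [apply integral_cos_nat; lia|].
    intros t. rewrite minus_INR by lia. reflexivity.
Qed.

Lemma integral_sin_diff j m : integral (fun t => sin ((INR j - INR m) * t)) 0 (2 * PI) = 0.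
Proof.
  destruct (Nat.le_gt_cases m j) as [Hle|Hgt].
  - rewrite (integral_ext _ (fun t => sin (INR (j - m) * t))); [apply integral_sin_nat|].
    intros t. rewrite minus_INR by lia. reflexivity.
  - rewrite (integral_ext _ (fun t => - sin (INR (m - j) * t))).
    + rewrite integral_opp, integral_sin_nat by solve_Rcont. ring.
    + intros t. rewrite minus_INR by lia. rewrite <- sin_neg. f_equal; ring.
Qed.

Lemma integral_cos_add j m : integral (fun t => cos ((INR j + INR m) * t)) 0 (2 * PI) =
  if Nat.eqb (j + m) 0 then 2 * PI else 0.
Proof.
  rewrite <- (integral_cos_diff (j + m) 0). apply integral_ext.
  intros t. rewrite plus_INR. simpl. f_equal; ring.
Qed.

Lemma integral_sin_add j m : integral (fun t => sin ((INR j + INR m) * t)) 0 (2 * PI) = 0.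
Proof.
  rewrite <- (integral_sin_diff (j + m) 0) at 2. apply integral_ext.
  intros t. rewrite plus_INR. simpl. f_equal; ring.
Qed.

Definition fcos (l : nat) (p : R -> R) : R :=
  / (2 * PI) * integral (fun t => p t * cos (INR l * t)) 0 (2 * PI).

Definition fsin (l : nat) (p : R -> R) : R :=
  / (2 * PI) * integral (fun t => p t * sin (INR l * t)) 0 (2 * PI).

Lemma integral_mul_cos l p : integral (fun t => p t * cos (INR l * t)) 0 (2 * PI) = 2 * PI * fcos l p.
Proof. unfold fcos. pose proof two_PI_pos. field. lra. Qed.

Lemma integral_mul_sin l p : integral (fun t => p t * sin (INR l * t)) 0 (2 * PI) = 2 * PI * fsin l p.
Proof. unfold fsin. pose proof two_PI_pos. field. lra. Qed.

Lemma fcos_ext l p q : (forall t, p t = q t) -> fcos l p = fcos l q.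
Proof. intros E. unfold fcos. f_equal. apply integral_ext. intros; rewrite E; auto. Qed.

Lemma fsin_ext l p q : (forall t, p t = q t) -> fsin l p = fsin l q.
Proof. intros E. unfold fsin. f_equal. apply integral_ext. intros; rewrite E; auto. Qed.

Lemma fsin_0 p : fsin 0 p = 0.
Proof.
  unfold fsin. rewrite (integral_ext _ (fun _ => 0)), integral_const; [ring|].
  intros; simpl. rewrite Rmult_0_l, sin_0. ring.
Qed.

Lemma fcos_lin2 j p q al be : Rcont p -> Rcont q ->
  fcos j (fun t => al * p t + be * q t) = al * fcos j p + be * fcos j q.
Proof.
  intros Hp Hq. unfold fcos.
  rewrite (integral_ext _ (fun t => al * (p t * cos (INR j * t)) + be * (q t * cos (INR j * t))))
    by (intros; ring).
  rewrite integral_lin2 by solve_Rcont. ring.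
Qed.

Lemma fsin_lin2 j p q al be : Rcont p -> Rcont q ->
  fsin j (fun t => al * p t + be * q t) = al * fsin j p + be * fsin j q.
Proof.
  intros Hp Hq. unfold fsin.
  rewrite (integral_ext _ (fun t => al * (p t * sin (INR j * t)) + be * (q t * sin (INR j * t))))
    by (intros; ring).
  rewrite integral_lin2 by solve_Rcont. ring.
Qed.

Lemma fcos_lsum {A} (l : list A) (c : A -> R) (F : A -> R -> R) j : (forall k, Rcont (F k)) ->
  fcos j (fun t => lsum l (fun k => c k * F k t)) = lsum l (fun k => c k * fcos j (F k)).
Proof.
  intros HF. unfold fcos.
  rewrite (integral_ext _ (fun t => lsum l (fun k => c k * (F k t * cos (INR j * t)))))
    by (intros t; rewrite lsum_mulr; apply lsum_ext; intros; ring).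
  rewrite integral_lsum by solve_Rcont. rewrite <- lsum_scal. apply lsum_ext.
  intros k _. rewrite integral_scal by solve_Rcont. ring.
Qed.

Lemma fsin_lsum {A} (l : list A) (c : A -> R) (F : A -> R -> R) j : (forall k, Rcont (F k)) ->
  fsin j (fun t => lsum l (fun k => c k * F k t)) = lsum l (fun k => c k * fsin j (F k)).
Proof.
  intros HF. unfold fsin.
  rewrite (integral_ext _ (fun t => lsum l (fun k => c k * (F k t * sin (INR j * t)))))
    by (intros t; rewrite lsum_mulr; apply lsum_ext; intros; ring).
  rewrite integral_lsum by solve_Rcont. rewrite <- lsum_scal. apply lsum_ext.
  intros k _. rewrite integral_scal by solve_Rcont. ring.
Qed.

Lemma fcos_cos j m : fcos j (fun t => cos (INR m * t)) =
  if Nat.eqb j m then (if Nat.eqb j 0 then 1 else / 2) else 0.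
Proof.
  unfold fcos.
  rewrite (integral_ext _ (fun t => / 2 * cos ((INR m - INR j) * t) + / 2 * cos ((INR m + INR j) * t))).
  2: { intros t. rewrite Rmult_minus_distr_r, Rmult_plus_distr_r, cos_minus, cos_plus. field. }
  rewrite integral_lin2, integral_cos_diff, integral_cos_add, (Nat.eqb_sym m j) by solve_Rcont.
  pose proof two_PI_pos.
  destruct (Nat.eqb j m) eqn:E.
  - apply Nat.eqb_eq in E; subst. destruct (Nat.eqb m 0) eqn:E0.
    + apply Nat.eqb_eq in E0; subst. simpl. field. lra.
    + apply Nat.eqb_neq in E0. replace (Nat.eqb (m + m) 0) with false by (symmetry; apply Nat.eqb_neq; lia).
      field. lra.
  - apply Nat.eqb_neq in E. replace (Nat.eqb (m + j) 0) with false by (symmetry; apply Nat.eqb_neq; lia).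
    field. lra.
Qed.

Lemma fsin_sin j m : fsin j (fun t => sin (INR m * t)) =
  if Nat.eqb j m then (if Nat.eqb j 0 then 0 else / 2) else 0.
Proof.
  unfold fsin.
  rewrite (integral_ext _ (fun t => / 2 * cos ((INR m - INR j) * t) + (- / 2) * cos ((INR m + INR j) * t))).
  2: { intros t. rewrite Rmult_minus_distr_r, Rmult_plus_distr_r, cos_minus, cos_plus. field. }
  rewrite integral_lin2, integral_cos_diff, integral_cos_add, (Nat.eqb_sym m j) by solve_Rcont.
  pose proof two_PI_pos.
  destruct (Nat.eqb j m) eqn:E.
  - apply Nat.eqb_eq in E; subst. destruct (Nat.eqb m 0) eqn:E0.
    + apply Nat.eqb_eq in E0; subst. simpl. field. lra.
    + apply Nat.eqb_neq in E0. replace (Nat.eqb (m + m) 0) with false by (symmetry; apply Nat.eqb_neq; lia).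
      field. lra.
  - apply Nat.eqb_neq in E. replace (Nat.eqb (m + j) 0) with false by (symmetry; apply Nat.eqb_neq; lia).
    field. lra.
Qed.

Lemma fsin_cos j m : fsin j (fun t => cos (INR m * t)) = 0.
Proof.
  unfold fsin.
  rewrite (integral_ext _ (fun t => / 2 * sin ((INR m + INR j) * t) + (- / 2) * sin ((INR m - INR j) * t))).
  - rewrite integral_lin2, integral_sin_diff, integral_sin_add by solve_Rcont. ring.
  - intros t. rewrite Rmult_minus_distr_r, Rmult_plus_distr_r, sin_minus, sin_plus. field.
Qed.

Lemma fcos_sin j m : fcos j (fun t => sin (INR m * t)) = 0.
Proof.
  unfold fcos.
  rewrite (integral_ext _ (fun t => / 2 * sin ((INR m + INR j) * t) + / 2 * sin ((INR m - INR j) * t))).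
  - rewrite integral_lin2, integral_sin_diff, integral_sin_add by solve_Rcont. ring.
  - intros t. rewrite Rmult_minus_distr_r, Rmult_plus_distr_r, sin_minus, sin_plus. field.
Qed.

Lemma is_derive_Rmult f g f' g' t : is_derive f t f' -> is_derive g t g' ->
  is_derive (fun t => f t * g t) t (f' * g t + f t * g').
Proof. intros Hf Hg. exact (is_derive_mult f g t f' g' Hf Hg Rmult_comm). Qed.

(* Integration by parts over a period, without boundary terms. *)
Lemma fourier_derive (p p' : R -> R) l : (forall t, is_derive p t (p' t)) -> Rcont p' ->
  (forall t, p (t + 2 * PI) = p t) ->
  fcos l p' = INR l * fsin l p /\ fsin l p' = - INR l * fcos l p.
Proof.
  intros Hd Hc Hp.
  assert (Hcp : Rcont p).
  { intros x. apply (@ex_derive_continuous R_AbsRing R_NormedModule). exists (p' x). apply Hd. }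
  assert (P0 : p (2 * PI) = p 0) by (rewrite <- (Rplus_0_l (2 * PI)); apply Hp).
  unfold fcos, fsin. split.
  - assert (E : integral (fun t => p' t * cos (INR l * t) + p t * (- INR l * sin (INR l * t))) 0 (2 * PI) = 0).
    { rewrite (integral_derive (fun t => p t * cos (INR l * t))).
      - rewrite cos_nat_2PI, Rmult_0_r, cos_0, P0. ring.
      - intros x. apply (is_derive_Rmult p (fun t => cos (INR l * t))); [apply Hd | apply is_derive_cos_mul].
      - solve_Rcont. }
    rewrite (integral_ext _ (fun t => p' t * cos (INR l * t) + (- INR l) * (p t * sin (INR l * t))))
      in E by (intros; ring).
    rewrite integral_plus, integral_scal in E by solve_Rcont.
    replace (integral (fun t => p' t * cos (INR l * t)) 0 (2 * PI))
      with (INR l * integral (fun t => p t * sin (INR l * t)) 0 (2 * PI)) by lra.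
    ring.
  - assert (E : integral (fun t => p' t * sin (INR l * t) + p t * (INR l * cos (INR l * t))) 0 (2 * PI) = 0).
    { rewrite (integral_derive (fun t => p t * sin (INR l * t))).
      - rewrite sin_nat_2PI, !Rmult_0_r, sin_0. ring.
      - intros x. apply (is_derive_Rmult p (fun t => sin (INR l * t))); [apply Hd | apply is_derive_sin_mul].
      - solve_Rcont. }
    rewrite (integral_ext _ (fun t => p' t * sin (INR l * t) + INR l * (p t * cos (INR l * t))))
      in E by (intros; ring).
    rewrite integral_plus, integral_scal in E by solve_Rcont.
    replace (integral (fun t => p' t * sin (INR l * t)) 0 (2 * PI))
      with (- INR l * integral (fun t => p t * cos (INR l * t)) 0 (2 * PI)) by lra.
    ring.
Qed.

Lemma fourier_shift psi c j : Rcont psi -> (forall t, psi (t + 2 * PI) = psi t) ->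
  fcos j (fun t => psi (t + c)) = cos (INR j * c) * fcos j psi + sin (INR j * c) * fsin j psi /\
  fsin j (fun t => psi (t + c)) = cos (INR j * c) * fsin j psi - sin (INR j * c) * fcos j psi.
Proof.
  intros Hc Hp.
  assert (Ec : integral (fun t => psi (t + c) * cos (INR j * (t + c))) 0 (2 * PI) = 2 * PI * fcos j psi).
  { rewrite (integral_shift (fun t => psi t * cos (INR j * t))) by solve_Rcont.
    replace (2 * PI + c) with ((0 + c) + 2 * PI) by ring.
    rewrite integral_periodic by (solve_Rcont || (intros; rewrite Hp, cos_nat_periodic; auto)).
    apply integral_mul_cos. }
  assert (Es : integral (fun t => psi (t + c) * sin (INR j * (t + c))) 0 (2 * PI) = 2 * PI * fsin j psi).
  { rewrite (integral_shift (fun t => psi t * sin (INR j * t))) by solve_Rcont.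
    replace (2 * PI + c) with ((0 + c) + 2 * PI) by ring.
    rewrite integral_periodic by (solve_Rcont || (intros; rewrite Hp, sin_nat_periodic; auto)).
    apply integral_mul_sin. }
  pose proof two_PI_pos. unfold fcos at 1, fsin at 2.
  split.
  - rewrite (integral_ext _ (fun t => cos (INR j * c) * (psi (t + c) * cos (INR j * (t + c)))
                                  + sin (INR j * c) * (psi (t + c) * sin (INR j * (t + c))))).
    + rewrite integral_lin2, Ec, Es by solve_Rcont. field. lra.
    + intros t. replace (INR j * t) with (INR j * (t + c) - INR j * c) at 1 by ring.
      rewrite cos_minus. ring.
  - rewrite (integral_ext _ (fun t => cos (INR j * c) * (psi (t + c) * sin (INR j * (t + c)))
                                  + (- sin (INR j * c)) * (psi (t + c) * cos (INR j * (t + c))))).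
    + rewrite integral_lin2, Ec, Es by solve_Rcont. field. lra.
    + intros t. replace (INR j * t) with (INR j * (t + c) - INR j * c) at 1 by ring.
      rewrite sin_minus. ring.
Qed.

Lemma integral_shift_mul_cos psi m t0 : Rcont psi -> (forall t, psi (t + 2 * PI) = psi t) ->
  integral (fun th => psi (th + t0) * cos (INR m * th)) (- PI) PI =
  2 * PI * (cos (INR m * t0) * fcos m psi + sin (INR m * t0) * fsin m psi).
Proof.
  intros Hc Hp. replace PI with (- PI + 2 * PI) at 2 by ring.
  rewrite integral_periodic, integral_mul_cos by
    (solve_Rcont || (intros t; replace (t + 2 * PI + t0) with (t + t0 + 2 * PI) by ring;
                     rewrite Hp, cos_nat_periodic; reflexivity)).
  rewrite (proj1 (fourier_shift psi t0 m Hc Hp)). reflexivity.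
Qed.

(** * Fourier partial sums and Bessel's inequality *)

Definition fourier_sum (p : R -> R) (l : list nat) (t : R) : R :=
  fcos 0 p + 2 * lsum l (fun j => fcos j p * cos (INR j * t) + fsin j p * sin (INR j * t)).

Lemma Rcont_fourier_sum p l : Rcont (fourier_sum p l).
Proof. unfold fourier_sum. solve_Rcont. Qed.

#[local] Hint Resolve Rcont_fourier_sum : Rcont_db.

Lemma fourier_sum_periodic p l t : fourier_sum p l (t + 2 * PI) = fourier_sum p l t.
Proof.
  unfold fourier_sum. do 2 f_equal. apply lsum_ext. intros j _.
  rewrite cos_nat_periodic, sin_nat_periodic. reflexivity.
Qed.

Lemma integral_mul_fourier_sum psi p l : Rcont psi ->
  integral (fun t => psi t * fourier_sum p l t) 0 (2 * PI) =
  2 * PI * (fcos 0 p * fcos 0 psi + 2 * lsum l (fun j => fcos j p * fcos j psi + fsin j p * fsin j psi)).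
Proof.
  intros Hpsi.
  rewrite (integral_ext _ (fun t => fcos 0 p * (psi t * cos (INR 0 * t)) + 2 * lsum l (fun j =>
        fcos j p * (psi t * cos (INR j * t)) + fsin j p * (psi t * sin (INR j * t))))).
  - rewrite integral_plus, !integral_scal, integral_lsum, integral_mul_cos by solve_Rcont.
    rewrite (lsum_ext _ _ (fun j => 2 * PI * (fcos j p * fcos j psi + fsin j p * fsin j psi))).
    + rewrite lsum_scal. ring.
    + intros j _. rewrite integral_plus, !integral_scal, integral_mul_cos, integral_mul_sin by solve_Rcont.
      ring.
  - intros t. unfold fourier_sum. simpl. rewrite Rmult_0_l, cos_0, Rmult_1_r, Rmult_plus_distr_l.
    f_equal; [ring|]. rewrite <- !lsum_scal. apply lsum_ext. intros; ring.
Qed.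

Lemma fourier_sum_coef p l m : NoDup l -> ~ In 0%nat l -> (m = 0%nat \/ In m l) ->
  fcos m (fourier_sum p l) = fcos m p /\ fsin m (fourier_sum p l) = fsin m p.
Proof.
  intros Hnd H0 Hm. pose proof two_PI_pos.
  assert (Hj : forall j, In j l -> Nat.eqb j 0 = false) by (intros j Hj; apply Nat.eqb_neq; intros ->; auto).
  split.
  - unfold fcos at 1. rewrite (integral_ext _ (fun t => cos (INR m * t) * fourier_sum p l t)) by (intros; ring).
    rewrite integral_mul_fourier_sum by solve_Rcont.
    rewrite (lsum_ext _ _ (fun j => fcos j p * (if Nat.eqb j m then / 2 else 0))).
    + rewrite fcos_cos. destruct Hm as [->|Hm].
      * rewrite lsum_delta_notin by auto. simpl. field. lra.
      * rewrite lsum_delta by auto. replace (Nat.eqb 0 m) with false by (symmetry; apply Nat.eqb_neq; intros <-; auto).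
        field. lra.
    + intros j Hjl. rewrite fcos_cos, fsin_cos, Hj by auto. ring.
  - destruct Hm as [->|Hm]; [rewrite !fsin_0; reflexivity|].
    unfold fsin at 1. rewrite (integral_ext _ (fun t => sin (INR m * t) * fourier_sum p l t)) by (intros; ring).
    rewrite integral_mul_fourier_sum by solve_Rcont.
    rewrite (lsum_ext _ _ (fun j => fsin j p * (if Nat.eqb j m then / 2 else 0))).
    + rewrite fcos_sin, lsum_delta by auto. field. lra.
    + intros j Hjl. rewrite fcos_sin, fsin_sin, Hj by auto. ring.
Qed.

(* The partial sum is the orthogonal projection of p, so |p - partial sum|^2 >= 0 gives it. *)
Lemma Bessel p l : Rcont p -> NoDup l -> ~ In 0%nat l ->
  fcos 0 p ^ 2 + 2 * lsum l (fun j => fcos j p ^ 2 + fsin j p ^ 2) <=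
  / (2 * PI) * integral (fun t => p t ^ 2) 0 (2 * PI).
Proof.
  intros Hp Hnd H0. pose proof two_PI_pos.
  set (T := fourier_sum p l).
  set (B := fcos 0 p ^ 2 + 2 * lsum l (fun j => fcos j p ^ 2 + fsin j p ^ 2)).
  assert (E1 : integral (fun t => p t * T t) 0 (2 * PI) = 2 * PI * B).
  { unfold T. rewrite integral_mul_fourier_sum by auto. unfold B.
    do 2 f_equal; [ring|]. f_equal. apply lsum_ext; intros; ring. }
  assert (E2 : integral (fun t => T t * T t) 0 (2 * PI) = 2 * PI * B).
  { unfold T. rewrite integral_mul_fourier_sum by solve_Rcont. unfold B.
    destruct (fourier_sum_coef p l 0 Hnd H0 (or_introl eq_refl)) as [-> _].
    do 2 f_equal; [ring|]. f_equal. apply lsum_ext. intros j Hj.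
    destruct (fourier_sum_coef p l j Hnd H0 (or_intror Hj)) as [-> ->]. ring. }
  assert (Hpos : 0 <= integral (fun t => (p t - T t) ^ 2) 0 (2 * PI))
    by (apply integral_ge0; [lra | solve_Rcont | intros; apply pow2_ge_0]).
  rewrite (integral_ext _ (fun t => p t ^ 2 - 2 * (p t * T t) + T t * T t)) in Hpos by (intros; ring).
  rewrite integral_plus, integral_minus, integral_scal, E1, E2 in Hpos by solve_Rcont.
  apply (Rmult_le_reg_l (2 * PI)); [lra|].
  rewrite <- Rmult_assoc, Rinv_r, Rmult_1_l by lra. lra.
Qed.

(** * Positive trigonometric kernels *)

Inductive cos_poly (n : nat) : (R -> R) -> Prop :=
  | cos_poly_cos m : (m <= n)%nat -> cos_poly n (fun th => cos (INR m * th))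
  | cos_poly_lin a P Q : cos_poly n P -> cos_poly n Q -> cos_poly n (fun th => a * P th + Q th)
  | cos_poly_ext P Q : cos_poly n P -> (forall th, P th = Q th) -> cos_poly n Q.

Lemma Rcont_cos_poly n P : cos_poly n P -> Rcont P.
Proof.
  induction 1; [apply Rcont_cos_mul | solve_Rcont | now apply (Rcont_ext P)].
Qed.

Lemma cos_poly_S n P : cos_poly n P -> cos_poly (S n) P.
Proof. induction 1; [apply cos_poly_cos; lia | now apply cos_poly_lin | eapply cos_poly_ext; eauto]. Qed.

Lemma cos_poly_0 n : cos_poly n (fun _ => 0).
Proof.
  apply (cos_poly_ext n (fun th => (-1) * cos (INR 0 * th) + cos (INR 0 * th))); [|intros; ring].
  apply cos_poly_lin; apply cos_poly_cos; lia.
Qed.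

Lemma cos_poly_mul_cos n P : cos_poly n P -> cos_poly (S n) (fun th => P th * cos th).
Proof.
  induction 1 as [m Hm| |].
  - destruct m as [|k].
    + apply (cos_poly_ext _ (fun th => cos (INR 1 * th))); [apply cos_poly_cos; lia|].
      intros th. simpl. rewrite Rmult_0_l, cos_0, !Rmult_1_l. reflexivity.
    + apply (cos_poly_ext _ (fun th => / 2 * cos (INR (S (S k)) * th) + (/ 2 * cos (INR k * th) + 0))).
      * apply cos_poly_lin; [apply cos_poly_cos; lia|].
        apply cos_poly_lin; [apply cos_poly_cos; lia | apply cos_poly_0].
      * intros th. rewrite !S_INR.
        replace ((INR k + 1 + 1) * th) with ((INR k + 1) * th + th) by ring.
        replace (INR k * th) with ((INR k + 1) * th - th) by ring.
        rewrite cos_plus, cos_minus. field.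
  - apply (cos_poly_ext _ (fun th => a * (P th * cos th) + Q th * cos th)); [now apply cos_poly_lin|].
    intros; ring.
  - apply (cos_poly_ext _ (fun th => P th * cos th)); auto. intros th. now rewrite H0.
Qed.

Definition kernel (n : nat) (th : R) : R := ((1 + cos th) / 2) ^ n.

Lemma cos_poly_kernel n : cos_poly n (kernel n).
Proof.
  induction n.
  - apply (cos_poly_ext _ (fun th => cos (INR 0 * th))); [apply cos_poly_cos; lia|].
    intros; unfold kernel; simpl. rewrite Rmult_0_l, cos_0. reflexivity.
  - apply (cos_poly_ext _ (fun th => / 2 * kernel n th + (/ 2 * (kernel n th * cos th) + 0))).
    + apply cos_poly_lin; [now apply cos_poly_S|].
      apply cos_poly_lin; [now apply cos_poly_mul_cos | apply cos_poly_0].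
    + intros th. unfold kernel. simpl. field.
Qed.

Lemma Rcont_kernel n : Rcont (kernel n).
Proof. apply (Rcont_cos_poly n), cos_poly_kernel. Qed.

#[local] Hint Resolve Rcont_kernel : Rcont_db.

Lemma kernel_ge0 n th : 0 <= kernel n th.
Proof. unfold kernel. apply pow_le. pose proof (COS_bound th). lra. Qed.

Lemma integral_shift_mul_cos_poly psi1 psi2 n t0 P : Rcont psi1 -> Rcont psi2 ->
  (forall t, psi1 (t + 2 * PI) = psi1 t) -> (forall t, psi2 (t + 2 * PI) = psi2 t) ->
  (forall m, (m <= n)%nat -> fcos m psi1 = fcos m psi2 /\ fsin m psi1 = fsin m psi2) ->
  cos_poly n P ->
  integral (fun th => psi1 (th + t0) * P th) (- PI) PI = integral (fun th => psi2 (th + t0) * P th) (- PI) PI.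
Proof.
  intros C1 C2 P1 P2 Hco HP. induction HP as [m Hm|a P Q HP IHP HQ IHQ|P Q HP IHP E].
  - rewrite !integral_shift_mul_cos; auto. destruct (Hco m Hm) as [-> ->]. reflexivity.
  - pose proof (Rcont_cos_poly n P HP). pose proof (Rcont_cos_poly n Q HQ).
    rewrite (integral_ext (fun th => psi1 (th + t0) * _)
               (fun th => a * (psi1 (th + t0) * P th) + psi1 (th + t0) * Q th)) by (intros; ring).
    rewrite (integral_ext (fun th => psi2 (th + t0) * _)
               (fun th => a * (psi2 (th + t0) * P th) + psi2 (th + t0) * Q th)) by (intros; ring).
    rewrite !integral_plus, !integral_scal, IHP, IHQ by solve_Rcont. reflexivity.
  - rewrite (integral_ext (fun th => psi1 (th + t0) * Q th) (fun th => psi1 (th + t0) * P th)),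
      (integral_ext (fun th => psi2 (th + t0) * Q th) (fun th => psi2 (th + t0) * P th))
      by (intros; rewrite E; reflexivity).
    exact IHP.
Qed.

Lemma cos_Rabs th : cos (Rabs th) = cos th.
Proof. unfold Rabs. destruct (Rcase_abs th); [apply cos_neg | reflexivity]. Qed.

Lemma cos_le_of_abs_le a th : a <= PI -> Rabs th <= a -> cos a <= cos th.
Proof.
  intros Ha Ht. rewrite <- (cos_Rabs th). pose proof (Rabs_pos th).
  destruct (Req_dec (Rabs th) a) as [->|E]; [lra|].
  left. apply cos_decreasing_1; lra.
Qed.

Lemma cos_le_of_le_abs a th : 0 <= a -> a <= Rabs th <= PI -> cos th <= cos a.
Proof.
  intros Ha Ht. rewrite <- (cos_Rabs th).
  destruct (Req_dec (Rabs th) a) as [->|E]; [lra|].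
  left. apply cos_decreasing_1; lra.
Qed.

Lemma kernel_ge_of_abs_le d n th : d <= PI -> Rabs th <= d -> ((1 + cos d) / 2) ^ n <= kernel n th.
Proof.
  intros Hd Hth. unfold kernel. apply pow_incr. pose proof (COS_bound d).
  pose proof (cos_le_of_abs_le d th Hd Hth). lra.
Qed.

Lemma kernel_le_of_le_abs d n th : 0 <= d -> d <= Rabs th <= PI -> kernel n th <= ((1 + cos d) / 2) ^ n.
Proof.
  intros Hd Hth. unfold kernel. apply pow_incr. pose proof (COS_bound th).
  pose proof (cos_le_of_le_abs d th Hd Hth). lra.
Qed.

Lemma integral_kernel_ge d n : 0 < d <= PI ->
  d * ((1 + cos (d / 2)) / 2) ^ n <= integral (kernel n) (- PI) PI.
Proof.
  intros Hd.
  rewrite <- (integral_Chasles (kernel n) (- PI) (- (d / 2)) PI), <- (integral_Chasles (kernel n) (- (d / 2)) (d / 2) PI)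
    by solve_Rcont.
  assert (0 <= integral (kernel n) (- PI) (- (d / 2)))
    by (apply integral_ge0; [lra | solve_Rcont | intros; apply kernel_ge0]).
  assert (0 <= integral (kernel n) (d / 2) PI)
    by (apply integral_ge0; [lra | solve_Rcont | intros; apply kernel_ge0]).
  enough (d * ((1 + cos (d / 2)) / 2) ^ n <= integral (kernel n) (- (d / 2)) (d / 2)) by lra.
  replace (d * ((1 + cos (d / 2)) / 2) ^ n) with (integral (fun _ => ((1 + cos (d / 2)) / 2) ^ n) (- (d / 2)) (d / 2))
    by (rewrite integral_const; field).
  apply integral_le; [lra | solve_Rcont | solve_Rcont |].
  intros th Hth. apply kernel_ge_of_abs_le; [lra|]. apply Rabs_le. lra.
Qed.

Lemma kernel_center_base_pos d : 0 < d <= PI -> 0 < (1 + cos (d / 2)) / 2.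
Proof.
  intros Hd. assert (cos d < cos (d / 2)) by (apply cos_decreasing_1; lra).
  pose proof (COS_bound d). lra.
Qed.

(* The kernel mass near 0 beats its mass away from 0 by an arbitrary factor. *)
Lemma kernel_tail_small d C c : 0 < d <= PI -> 0 <= C -> 0 < c ->
  exists n, C * ((1 + cos d) / 2) ^ n <= c * ((1 + cos (d / 2)) / 2) ^ n.
Proof.
  intros Hd HC Hc.
  set (q := (1 + cos d) / 2). set (q' := (1 + cos (d / 2)) / 2).
  assert (Hq : 0 <= q) by (unfold q; pose proof (COS_bound d); lra).
  assert (Hq' : 0 < q') by (apply kernel_center_base_pos; auto).
  assert (Hx : Rabs (q / q') < 1).
  { rewrite Rabs_right by (apply Rle_ge, Rdiv_le_0_compat; lra).
    apply (Rmult_lt_reg_r q'); [lra|]. unfold Rdiv. rewrite Rmult_assoc, Rinv_l by lra.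
    unfold q, q'. assert (cos d < cos (d / 2)) by (apply cos_decreasing_1; lra). lra. }
  destruct (pow_lt_1_zero (q / q') Hx (c / (C + 1))) as [n Hn]; [apply Rdiv_lt_0_compat; lra|].
  exists n. specialize (Hn n (le_n n)).
  assert (Hxn : 0 <= (q / q') ^ n) by (apply pow_le, Rdiv_le_0_compat; lra).
  rewrite Rabs_right in Hn by lra.
  assert (HCx : C * (q / q') ^ n <= c).
  { apply (Rmult_lt_compat_l (C + 1)) in Hn; [|lra].
    replace ((C + 1) * (c / (C + 1))) with c in Hn by (field; lra). nra. }
  replace (q ^ n) with ((q / q') ^ n * q' ^ n) by (rewrite <- Rpow_mult_distr; f_equal; field; lra).
  rewrite <- Rmult_assoc. apply Rmult_le_compat_r; [apply pow_le; lra | exact HCx].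
Qed.

Lemma kernel_concentration phi t0 eps : Rcont phi -> 0 < eps -> exists n,
  0 < integral (kernel n) (- PI) PI /\
  Rabs (integral (fun th => (phi (th + t0) - phi t0) * kernel n th) (- PI) PI) <=
    eps * integral (kernel n) (- PI) PI.
Proof.
  intros Hphi He. pose proof PI_RGT_0.
  destruct (Rcont_eps phi t0 (eps / 2) Hphi) as [d0 [Hd0 Hnear]]; [lra|].
  set (d := Rmin d0 PI).
  assert (Hd : 0 < d <= PI) by (unfold d; split; [apply Rmin_glb_lt | apply Rmin_r]; lra).
  assert (Hdd0 : d <= d0) by apply Rmin_l.
  set (h := fun th => Rabs (phi (th + t0) - phi t0)).
  destruct (continuity_ab_maj h (- PI) PI) as [Mx [HM _]];
    [lra | intros c _; apply Rcont_continuity_pt; unfold h; solve_Rcont |].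
  set (B := h Mx). assert (HB : 0 <= B) by apply Rabs_pos.
  set (q := (1 + cos d) / 2). set (q' := (1 + cos (d / 2)) / 2).
  destruct (kernel_tail_small d (B * (2 * PI)) (eps / 2 * d) Hd) as [n Hn]; [nra | nra |].
  fold q q' in Hn. exists n. set (K := integral (kernel n) (- PI) PI).
  assert (Hlow : d * q' ^ n <= K) by (apply integral_kernel_ge; auto).
  assert (Hq' : 0 < q' ^ n) by (apply pow_lt, kernel_center_base_pos; auto).
  split; [nra|].
  assert (Hup : forall th, - PI <= th <= PI ->
            Rabs ((phi (th + t0) - phi t0) * kernel n th) <= eps / 2 * kernel n th + B * q ^ n).
  { intros th Hth. rewrite Rabs_mult, (Rabs_right (kernel n th)) by (apply Rle_ge, kernel_ge0).
    pose proof (kernel_ge0 n th). assert (0 <= q ^ n) by (apply pow_le; unfold q; pose proof (COS_bound d); lra).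
    destruct (Rlt_le_dec (Rabs th) d) as [Hlt|Hge].
    - assert (Rabs (phi (th + t0) - phi t0) < eps / 2) by (apply Hnear; rewrite Rplus_minus_r; lra).
      nra.
    - assert (kernel n th <= q ^ n) by (apply kernel_le_of_le_abs; [lra | split; [lra | apply Rabs_le; lra]]).
      assert (Rabs (phi (th + t0) - phi t0) <= B) by (apply HM; lra).
      pose proof (Rabs_pos (phi (th + t0) - phi t0)). nra. }
  eapply Rle_trans; [apply integral_abs; [lra | solve_Rcont]|].
  eapply Rle_trans;
    [apply (integral_le _ (fun th => eps / 2 * kernel n th + B * q ^ n)); [lra | solve_Rcont | solve_Rcont | exact Hup]|].
  rewrite integral_plus, integral_scal, integral_const by solve_Rcont. fold K.
  nra.
Qed.

Lemma abs_le_of_fourier_sum_bound phi t0 M : Rcont phi -> (forall t, phi (t + 2 * PI) = phi t) ->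
  (forall n th, Rabs (fourier_sum phi (seq 1 n) th) <= M) -> Rabs (phi t0) <= M.
Proof.
  intros Hc Hp HM. apply Rle_plus_epsilon. intros eps He.
  destruct (kernel_concentration phi t0 eps Hc He) as [n [HK Hap]].
  set (K := integral (kernel n) (- PI) PI) in *.
  set (I := integral (fun th => phi (th + t0) * kernel n th) (- PI) PI).
  assert (E1 : integral (fun th => (phi (th + t0) - phi t0) * kernel n th) (- PI) PI = I - phi t0 * K).
  { rewrite (integral_ext _ (fun th => phi (th + t0) * kernel n th - phi t0 * kernel n th)) by (intros; ring).
    rewrite integral_minus, integral_scal by solve_Rcont. reflexivity. }
  assert (E2 : I = integral (fun th => fourier_sum phi (seq 1 n) (th + t0) * kernel n th) (- PI) PI).
  { apply integral_shift_mul_cos_poly with n; auto using Rcont_fourier_sum, fourier_sum_periodic, cos_poly_kernel.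
    intros m Hm. destruct (fourier_sum_coef phi (seq 1 n) m) as [A1 A2]; auto.
    - apply seq_NoDup.
    - rewrite in_seq. lia.
    - destruct m; [left; auto | right; apply in_seq; lia]. }
  assert (HI : Rabs I <= M * K).
  { rewrite E2. eapply Rle_trans; [apply integral_abs; [pose proof PI_RGT_0; lra | solve_Rcont]|].
    unfold K. rewrite <- integral_scal by solve_Rcont.
    apply integral_le; [pose proof PI_RGT_0; lra | solve_Rcont | solve_Rcont |].
    intros th _. rewrite Rabs_mult, (Rabs_right (kernel n th)) by (apply Rle_ge, kernel_ge0).
    apply Rmult_le_compat_r; [apply kernel_ge0 | apply HM]. }
  rewrite E1 in Hap. apply Rmult_le_reg_r with K; auto.
  rewrite <- (Rabs_right K) at 1 by lra. rewrite <- Rabs_mult.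
  replace (phi t0 * K) with (I - (I - phi t0 * K)) by ring.
  eapply Rle_trans; [apply Rabs_triang|]. rewrite Rabs_Ropp. lra.
Qed.

(** * Fourier coefficients of vector-valued functions *)

Section Ordinals.
Import ssrbool fintype.
Definition ords (N : nat) : list 'I_N := enum 'I_N.
End Ordinals.

Lemma sumI_lsum N (F : fintype.ordinal N -> R) : sumI F = lsum (ords N) F.
Proof. reflexivity. Qed.

Lemma mv_lsum N (M : mat N) v i : mv M v i = lsum (ords N) (fun k => M i k * v k).
Proof. reflexivity. Qed.

Lemma Rcont_mv N (M : mat N) (w : R -> vec N) i :
  (forall k, Rcont (fun t => w t k)) -> Rcont (fun t => mv M (w t) i).
Proof. intros Hw. apply (Rcont_ext (fun t => lsum (ords N) (fun k => M i k * w t k))); [reflexivity | solve_Rcont]. Qed.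

#[local] Hint Resolve Rcont_mv : Rcont_db.

Lemma mv_opp N (M : mat N) v i : mv M (fun k => - v k) i = - mv M v i.
Proof.
  rewrite !mv_lsum, <- lsum_opp. apply lsum_ext; intros; ring.
Qed.

Lemma vnorm_ge0 N (v : vec N) : 0 <= vnorm v.
Proof. apply sqrt_pos. Qed.

Lemma cnorm_ge0 N (v : cvec N) : 0 <= cnorm v.
Proof. apply sqrt_pos. Qed.

Lemma vnorm_sq N (v : vec N) : vnorm v ^ 2 = lsum (ords N) (fun i => v i ^ 2).
Proof. apply pow2_sqrt, lsum_nonneg. intros; apply pow2_ge_0. Qed.

Lemma cnorm_sq N (v : cvec N) : cnorm v ^ 2 = lsum (ords N) (fun i => fst v i ^ 2 + snd v i ^ 2).
Proof.
  apply pow2_sqrt, lsum_nonneg. intros.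
  pose proof (pow2_ge_0 (fst v x)). pose proof (pow2_ge_0 (snd v x)). lra.
Qed.

Lemma vnorm_ext N (v w : vec N) : (forall i, v i = w i) -> vnorm v = vnorm w.
Proof. intros E. unfold vnorm. rewrite !sumI_lsum. f_equal. apply lsum_ext. intros; rewrite E; auto. Qed.

Lemma cnorm_ext N (v w : cvec N) :
  (forall i, fst v i = fst w i /\ snd v i = snd w i) -> cnorm v = cnorm w.
Proof.
  intros E. unfold cnorm. rewrite !sumI_lsum. f_equal. apply lsum_ext.
  intros i _. destruct (E i) as [-> ->]. reflexivity.
Qed.

Lemma cnorm_real N (v : cvec N) : (forall i, snd v i = 0) -> cnorm v = vnorm (fst v).
Proof.
  intros H0. unfold cnorm, vnorm. rewrite !sumI_lsum. f_equal. apply lsum_ext.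
  intros i _. rewrite H0. ring.
Qed.

Lemma vnorm_dot_le N (e w : vec N) : Rabs (lsum (ords N) (fun i => e i * w i)) <= vnorm e * vnorm w.
Proof. unfold vnorm. rewrite !sumI_lsum. apply lsum_Cauchy_Schwarz. Qed.

(* The complex coefficient (1/2pi) int w(t) e^{-ijt} dt, as (real part, imaginary part). *)
Definition fourier_coef {N} (w : R -> vec N) (j : nat) : cvec N :=
  (fun i => fcos j (fun t => w t i), fun i => - fsin j (fun t => w t i)).

Lemma cnorm_fourier_coef_0 N (w : R -> vec N) :
  cnorm (fourier_coef w 0) = vnorm (fst (fourier_coef w 0)).
Proof. apply cnorm_real. intros i. simpl. rewrite fsin_0. ring. Qed.

Lemma fcos_mv N (M : mat N) (u : R -> vec N) j i : (forall k, Rcont (fun t => u t k)) ->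
  fcos j (fun t => mv M (u t) i) = mv M (fun k => fcos j (fun t => u t k)) i.
Proof. intros Hc. exact (fcos_lsum (ords N) (M i) (fun k t => u t k) j Hc). Qed.

Lemma fsin_mv N (M : mat N) (u : R -> vec N) j i : (forall k, Rcont (fun t => u t k)) ->
  fsin j (fun t => mv M (u t) i) = mv M (fun k => fsin j (fun t => u t k)) i.
Proof. intros Hc. exact (fsin_lsum (ords N) (M i) (fun k t => u t k) j Hc). Qed.

Section Symmetry.

Variables (N : nat) (M : mat N) (c : R) (u : R -> vec N).
Hypothesis u_cont : forall i, Rcont (fun t => u t i).
Hypothesis u_periodic : forall t i, u (t + 2 * PI) i = u t i.
Hypothesis u_symmetric : forall t i, mv M (u (t - 2 * PI * c)) i = u t i.

Lemma fourier_coef_symmetric j i :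
  mv M (fun k => fcos j (fun t => u t k)) i =
    cos (INR j * (2 * PI * c)) * fcos j (fun t => u t i) + sin (INR j * (2 * PI * c)) * fsin j (fun t => u t i) /\
  mv M (fun k => fsin j (fun t => u t k)) i =
    cos (INR j * (2 * PI * c)) * fsin j (fun t => u t i) - sin (INR j * (2 * PI * c)) * fcos j (fun t => u t i).
Proof.
  assert (E : forall t, mv M (u t) i = u (t + 2 * PI * c) i).
  { intros t. rewrite <- u_symmetric. replace (t + 2 * PI * c - 2 * PI * c) with t by ring. reflexivity. }
  rewrite <- fcos_mv, <- fsin_mv by auto.
  rewrite (fcos_ext j (fun t => mv M (u t) i) (fun t => u (t + 2 * PI * c) i)),
    (fsin_ext j (fun t => mv M (u t) i) (fun t => u (t + 2 * PI * c) i)) by auto.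
  apply (fourier_shift (fun t => u t i)); auto.
Qed.

Lemma fourier_coef_0_fixed i : mv M (fst (fourier_coef u 0)) i = fst (fourier_coef u 0) i.
Proof.
  destruct (fourier_coef_symmetric 0 i) as [E _]. simpl. rewrite E.
  rewrite Rmult_0_l, cos_0, sin_0. ring.
Qed.

Lemma fourier_coef_twisted l i :
  let v := fourier_coef u l in
  let th := 2 * PI * INR l * c in
  cos th * mv M (fst v) i + sin th * mv M (snd v) i = fst v i /\
  cos th * mv M (snd v) i - sin th * mv M (fst v) i = snd v i.
Proof.
  simpl. rewrite mv_opp. destruct (fourier_coef_symmetric l i) as [-> ->].
  replace (INR l * (2 * PI * c)) with (2 * PI * INR l * c) by ring.
  set (th := 2 * PI * INR l * c). set (C := fcos l (fun t => u t i)). set (S := fsin l (fun t => u t i)).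
  pose proof (sin2_cos2 th) as E. unfold Rsqr in E.
  split.
  - transitivity (C * (sin th * sin th + cos th * cos th)); [ring | rewrite E; ring].
  - transitivity (- S * (sin th * sin th + cos th * cos th)); [ring | rewrite E; ring].
Qed.

End Symmetry.

Lemma vector_Bessel N (w : R -> vec N) M n : (forall i, Rcont (fun t => w t i)) ->
  (forall t, vnorm (w t) <= M) ->
  cnorm (fourier_coef w 0) ^ 2 + 2 * lsum (seq 1 n) (fun j => cnorm (fourier_coef w j) ^ 2) <= M ^ 2.
Proof.
  intros Hc HM. pose proof two_PI_pos.
  rewrite cnorm_sq, (lsum_ext _ _ (fun j => lsum (ords N) (fun i => fcos j (fun t => w t i) ^ 2
                                                          + fsin j (fun t => w t i) ^ 2)))
    by (intros; rewrite cnorm_sq; apply lsum_ext; intros; simpl; ring).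
  rewrite lsum_swap, <- lsum_scal, <- lsum_plus.
  apply Rle_trans with (lsum (ords N) (fun i => / (2 * PI) * integral (fun t => w t i ^ 2) 0 (2 * PI))).
  { apply lsum_le. intros i _. unfold fourier_coef. cbn [fst snd]. rewrite fsin_0.
    replace ((- 0) ^ 2) with 0 by ring. rewrite Rplus_0_r.
    apply (Bessel (fun t => w t i) (seq 1 n) (Hc i) (seq_NoDup n 1)). rewrite in_seq. lia. }
  rewrite lsum_scal, <- integral_lsum by solve_Rcont.
  replace (M ^ 2) with (/ (2 * PI) * integral (fun _ => M ^ 2) 0 (2 * PI))
    by (rewrite integral_const; field; lra).
  apply Rmult_le_compat_l; [left; apply Rinv_0_lt_compat; lra|].
  apply integral_le; [lra | solve_Rcont | solve_Rcont |].
  intros t _. rewrite <- vnorm_sq. apply pow_incr. split; [apply vnorm_ge0 | apply HM].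
Qed.

Lemma fourier_sum_dot_le N (w : R -> vec N) (e : vec N) l th : (forall k, Rcont (fun t => w t k)) ->
  Rabs (fourier_sum (fun t => lsum (ords N) (fun i => e i * w t i)) l th) <=
  vnorm e * (cnorm (fourier_coef w 0) + 2 * lsum l (fun j => cnorm (fourier_coef w j))).
Proof.
  intros Hc. rewrite cnorm_fourier_coef_0. unfold fourier_sum.
  rewrite fcos_lsum by auto.
  rewrite (lsum_ext l _ (fun j => lsum (ords N) (fun i => e i *
     (fcos j (fun t => w t i) * cos (INR j * th) + fsin j (fun t => w t i) * sin (INR j * th))))).
  2: { intros j _. rewrite fcos_lsum, fsin_lsum, !lsum_mulr, <- lsum_plus by auto.
       apply lsum_ext; intros; ring. }
  eapply Rle_trans; [apply Rabs_triang|]. rewrite Rabs_mult, (Rabs_right 2) by lra.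
  rewrite Rmult_plus_distr_l. apply Rplus_le_compat; [apply vnorm_dot_le|].
  rewrite <- Rmult_assoc, (Rmult_comm (vnorm e) 2), Rmult_assoc. apply Rmult_le_compat_l; [lra|].
  eapply Rle_trans; [apply lsum_abs|]. rewrite <- lsum_scal. apply lsum_le. intros j _.
  eapply Rle_trans; [apply vnorm_dot_le|]. apply Rmult_le_compat_l; [apply vnorm_ge0|].
  unfold vnorm, cnorm. rewrite !sumI_lsum. apply sqrt_le_1_alt, lsum_le. intros i _. simpl.
  set (C := fcos j (fun t => w t i)). set (S := fsin j (fun t => w t i)).
  pose proof (sin2_cos2 (INR j * th)) as E. unfold Rsqr in E.
  (* Cauchy-Schwarz in the plane: (C cos + S sin)^2 <= (C^2 + S^2)(cos^2 + sin^2) *)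
  pose proof (pow2_ge_0 (C * sin (INR j * th) - S * cos (INR j * th))). nra.
Qed.

Lemma vnorm_le_of_fourier_coef_bound N (w : R -> vec N) B :
  (forall i, Rcont (fun t => w t i)) -> (forall t i, w (t + 2 * PI) i = w t i) ->
  (forall n, cnorm (fourier_coef w 0) + 2 * lsum (seq 1 n) (fun j => cnorm (fourier_coef w j)) <= B) ->
  forall t0, vnorm (w t0) <= B.
Proof.
  intros Hc Hp HB t0. set (e := w t0).
  set (phi := fun t => lsum (ords N) (fun i => e i * w t i)).
  assert (Hphi : Rabs (phi t0) <= vnorm e * B).
  { apply abs_le_of_fourier_sum_bound; [unfold phi; solve_Rcont | intros t; unfold phi; apply lsum_ext; intros; rewrite Hp; auto |].
    intros n th. eapply Rle_trans; [apply fourier_sum_dot_le; auto|].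
    apply Rmult_le_compat_l; [apply vnorm_ge0 | apply HB]. }
  replace (phi t0) with (vnorm e ^ 2) in Hphi by (rewrite vnorm_sq; apply lsum_ext; intros; unfold e; ring).
  rewrite Rabs_right in Hphi by (apply Rle_ge, pow2_ge_0).
  assert (0 <= B) by (specialize (HB 0%nat); simpl in HB; pose proof (cnorm_ge0 _ (fourier_coef w 0)); lra).
  pose proof (vnorm_ge0 _ e). nra.
Qed.

Lemma sum_f_R0_le_infinite_sum F Ssum n : (forall j, 0 <= F j) -> infinite_sum F Ssum -> sum_f_R0 F n <= Ssum.
Proof.
  intros Hp Hs. apply (growing_ineq (fun n => sum_f_R0 F n)); [|exact Hs].
  intros m. simpl. pose proof (Hp (S m)). lra.
Qed.

(* Weighted Cauchy-Schwarz; the weight 2 on the terms j >= 1 costs the factor sqrt 2. *)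
Lemma weighted_sum_le (x y K : nat -> R) Ssum M n :
  (forall j, 0 <= K j) -> (forall j, (j <= n)%nat -> x j <= K j * y j) ->
  infinite_sum (fun j => K j ^ 2) Ssum -> 0 <= M ->
  y 0%nat ^ 2 + 2 * lsum (seq 1 n) (fun j => y j ^ 2) <= M ^ 2 ->
  x 0%nat + 2 * lsum (seq 1 n) x <= sqrt 2 * sqrt Ssum * M.
Proof.
  intros HK Hxy HS HM Hy.
  set (w := fun j => if Nat.eqb j 0 then y 0%nat else 2 * y j).
  assert (Hw : forall F, lsum (seq 0 (S n)) (fun j => F j (w j)) =
                         F 0%nat (y 0%nat) + lsum (seq 1 n) (fun j => F j (2 * y j))).
  { intros F. change (seq 0 (S n)) with (0%nat :: seq 1 n). rewrite lsum_cons. f_equal.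
    apply lsum_ext. intros j Hj. apply in_seq in Hj. unfold w.
    replace (Nat.eqb j 0) with false by (symmetry; apply Nat.eqb_neq; lia). reflexivity. }
  apply Rle_trans with (lsum (seq 0 (S n)) (fun j => K j * w j)).
  { rewrite (Hw (fun j v => K j * v)). apply Rplus_le_compat; [apply Hxy; lia|].
    rewrite <- lsum_scal. apply lsum_le. intros j Hj. apply in_seq in Hj.
    pose proof (Hxy j ltac:(lia)). lra. }
  eapply Rle_trans; [apply Rle_abs|]. eapply Rle_trans; [apply lsum_Cauchy_Schwarz|].
  rewrite (Rmult_comm (sqrt 2)), Rmult_assoc. apply Rmult_le_compat; try apply sqrt_pos.
  - apply sqrt_le_1_alt. rewrite lsum_seq_sum_f_R0.
    apply (sum_f_R0_le_infinite_sum (fun j => K j ^ 2)); [intros; apply pow2_ge_0 | exact HS].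
  - rewrite <- (sqrt_pow2 M HM), <- sqrt_mult by (lra || apply pow2_ge_0). apply sqrt_le_1_alt.
    rewrite (Hw (fun _ v => v ^ 2)), (lsum_ext _ _ (fun j => 4 * y j ^ 2)), lsum_scal by (intros; ring).
    pose proof (pow2_ge_0 (y 0%nat)). lra.
Qed.

(** * The a priori estimate *)

Section PeriodicSolution.

Variables (N : nat) (A0 : mat N) (b : R) (u u' : R -> vec N).
Hypothesis u_derive : forall i t, derivable_pt_lim (fun t0 => u t0 i) t (u' t i).
Hypothesis u'_cont : forall i t, continuity_pt (fun t0 => u' t0 i) t.
Hypothesis u_periodic : forall t i, u (t + 2 * PI) i = u t i.

Lemma Rcont_solution i : Rcont (fun t => u t i).
Proof.
  intros x. apply (@ex_derive_continuous R_AbsRing R_NormedModule).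
  exists (u' x i). apply is_derive_Reals, u_derive.
Qed.

Definition residual (t : R) : vec N := fun i => b * u' t i - mv A0 (u t) i.

Lemma Rcont_residual i : Rcont (fun t => residual t i).
Proof.
  assert (Hu' : Rcont (fun t => u' t i)) by (intros x; apply continuity_pt_filterlim, u'_cont).
  pose proof Rcont_solution. unfold residual. solve_Rcont.
Qed.

Lemma fourier_coef_residual j i :
  fst (fourier_coef residual j) i = fst (Delta_c A0 j b (fourier_coef u j)) i /\
  snd (fourier_coef residual j) i = snd (Delta_c A0 j b (fourier_coef u j)) i.
Proof.
  pose proof Rcont_solution.
  assert (Hu' : Rcont (fun t => u' t i)) by (intros x; apply continuity_pt_filterlim, u'_cont).
  destruct (fourier_derive (fun t => u t i) (fun t => u' t i) j) as [Ec Es]; auto.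
  { intros t. apply is_derive_Reals, u_derive. }
  unfold fourier_coef, Delta_c. cbn [fst snd].
  rewrite (fcos_ext j (fun t => residual t i) (fun t => b * u' t i + (-1) * mv A0 (u t) i)),
    (fsin_ext j (fun t => residual t i) (fun t => b * u' t i + (-1) * mv A0 (u t) i))
    by (intros; unfold residual; ring).
  rewrite fcos_lin2, fsin_lin2, fcos_mv, fsin_mv, mv_opp, Ec, Es
    by solve_Rcont.
  split; ring.
Qed.

Lemma cnorm_fourier_coef_residual j :
  cnorm (fourier_coef residual j) = cnorm (Delta_c A0 j b (fourier_coef u j)).
Proof. apply cnorm_ext, fourier_coef_residual. Qed.

Lemma cnorm_fourier_coef_residual_0 :
  cnorm (fourier_coef residual 0) = vnorm (fun i => - mv A0 (fst (fourier_coef u 0)) i).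
Proof.
  rewrite cnorm_fourier_coef_0. apply vnorm_ext. intros i.
  rewrite (proj1 (fourier_coef_residual 0 i)). simpl. ring.
Qed.

Lemma solution_sup_bound (K : nat -> R) Ssum M :
  (forall j, 0 <= K j) ->
  (forall j, cnorm (fourier_coef u j) <= K j * cnorm (fourier_coef residual j)) ->
  infinite_sum (fun j => K j ^ 2) Ssum -> 0 <= M -> (forall t, vnorm (residual t) <= M) ->
  forall t, vnorm (u t) <= sqrt 2 * sqrt Ssum * M.
Proof.
  intros HK Hcoef HS HM Hres.
  apply vnorm_le_of_fourier_coef_bound; [apply Rcont_solution | apply u_periodic |]. intros n.
  apply (weighted_sum_le (fun j => cnorm (fourier_coef u j)) (fun j => cnorm (fourier_coef residual j)) K);
    auto.
  apply vector_Bessel; [apply Rcont_residual | exact Hres].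
Qed.

End PeriodicSolution.

Arguments residual {N} A0 b u u' t _.

Lemma vnorm_scal N c (v : vec N) : vnorm (fun i => c * v i) = Rabs c * vnorm v.
Proof.
  unfold vnorm. rewrite !sumI_lsum, <- sqrt_Rsqr_abs, <- sqrt_mult by (apply Rle_0_sqr || (apply lsum_nonneg; intros; apply pow2_ge_0)).
  f_equal. rewrite <- lsum_scal. apply lsum_ext. intros. unfold Rsqr. ring.
Qed.

Lemma vnorm_scal_growth_le N (F : vec N -> vec N) Nfa r Rb mu s x :
  0 <= Nfa -> 0 <= mu <= 1 -> r < s < Rb -> vnorm x <= s ->
  (forall y, vnorm y <= Rb -> vnorm (F y) <= Nfa * Rmax r (vnorm y)) ->
  vnorm (fun i => mu * F x i) <= Nfa * s.
Proof.
  intros HN Hmu Hs Hx HF. rewrite vnorm_scal, Rabs_right by lra.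
  apply Rle_trans with (vnorm (F x)); [pose proof (vnorm_ge0 _ (F x)); nra|].
  apply Rle_trans with (Nfa * Rmax r (vnorm x)); [apply HF; lra|].
  apply Rmult_le_compat_l; [lra | apply Rmax_lub; lra].
Qed.

Lemma closure2_strip am ap (D : R -> R -> Prop) a b :
  (forall a b, D a b -> am <= a <= ap /\ 0 <= b) -> closure2 D a b -> am <= a <= ap.
Proof.
  intros Hsub Hcl.
  assert (Hdist : forall eps, 0 < eps -> exists a', am <= a' <= ap /\ (a - a') ^ 2 < eps ^ 2).
  { intros eps He. destruct (Hcl eps He) as [a' [b' [HD Hd]]]. exists a'.
    split; [apply (Hsub a' b' HD)|]. unfold dist2 in Hd. simpl in Hd. pose proof (pow2_ge_0 (b - b')). lra. }
  split; apply Rnot_lt_le; intros Hlt.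
  - destruct (Hdist (am - a)) as [a' [Ha' Hd]]; [lra | nra].
  - destruct (Hdist (a - ap)) as [a' [Ha' Hd]]; [lra | nra].
Qed.

(* Imported last: ssreflect's [rewrite] would change the tactic language above. *)
From mathcomp Require Import all_boot all_fingroup.

Theorem lemma1
  (gT : finGroupType) (N : nat) (rho : gT -> mat N)
  (H : {group gT}) (phi : gT -> R)
  (am ap : R) (A : R -> mat N) (f : R -> vec N -> vec N)
  (D : R -> R -> Prop) (Nf : R -> R) (r Rb : R)
  (* setting *)
  (Hrho : orth_rep rho)
  (Hphi : twist_hom H phi)
  (Hint : am < ap)
  (HAeq : forall a, am <= a <= ap -> forall g : gT,
            mm (A a) (rho g) = mm (rho g) (A a))
  (Hfeq : forall a, am <= a <= ap -> forall (g : gT) (x : vec N),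
            f a (mv (rho g) x) = mv (rho g) (f a x))
  (* (P0) *)
  (HP0A : forall i j a, am <= a <= ap -> forall eps, 0 < eps -> exists delta, 0 < delta /\
            forall a', am <= a' <= ap -> Rabs (a' - a) < delta ->
              Rabs (A a' i j - A a i j) < eps)
  (HP0f : forall a x, am <= a <= ap -> forall eps, 0 < eps -> exists delta, 0 < delta /\
            forall a' x', am <= a' <= ap -> Rabs (a' - a) < delta ->
              vnorm (vsub x' x) < delta -> vnorm (vsub (f a' x') (f a x)) < eps)
  (* (P1) *)
  (HP1 : forall a, am <= a <= ap -> Lambda0_nonzero rho H (A a))
  (* (P3) *)
  (HP3sub : forall a b, D a b -> am <= a <= ap /\ 0 <= b)
  (HP3open : forall a b, D a b -> exists eps, 0 < eps /\
               forall a' b', am <= a' <= ap -> 0 <= b' ->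
                 dist2 (a, b) (a', b') < eps ^ 2 -> D a' b')
  (HP3disk : homeomorphic2 (fun p => closure2 D (fst p) (snd p)) closed_disk)
  (HP3pos : forall a b, closure2 D a b -> 0 < b)
  (HP3iii : forall a b, boundary2 D a b ->
              forall l : nat, (1 <= l)%nat -> Lambda_nonzero rho H phi (A a) l b)
  (* (P4) *)
  (HP4N : forall a, am <= a <= ap -> 0 <= Nf a)
  (HP4r : 0 <= r) (HP4rR : r < Rb)
  (HP4 : forall a, am <= a <= ap -> forall x : vec N, vnorm x <= Rb ->
           vnorm (f a x) <= Nf a * Rmax r (vnorm x))
  (* (P5): N(alpha) < 1/(sqrt(2 pi) M(alpha,beta)), with
     M^2 = sum_{l>=0} |Delta_l(alpha,0,beta)^{-1}|^2 *)
  (HP5 : forall a b, boundary2 D a b ->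
           exists K : nat -> R,
             inv_opnorm (@vnorm N) (fixH rho H)
               (fun v i => - mv (A a) v i) (K 0%nat) /\
             (forall l : nat, (1 <= l)%nat ->
                inv_opnorm (@cnorm N) (twisted_space rho H phi l)
                  (Delta_c (A a) l b) (K l)) /\
             exists S : R, infinite_sum (fun l => K l ^ 2) S /\
               Nf a * (sqrt (2 * PI) * sqrt S) < 1)
  (* the point, mu and s *)
  (a b mu s : R)
  (Hab : boundary2 D a b)
  (Hmu : 0 <= mu <= 1)
  (Hs : r < s < Rb) :
  ~ exists (u u' : R -> vec N),
      (* u is C^1 with derivative u' *)
      (forall i t, derivable_pt_lim (fun t0 => u t0 i) t (u' t i)) /\
      (forall i t, continuity_pt (fun t0 => u' t0 i) t) /\
      (* 2 pi-periodic *)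
      (forall t i, u (t + 2 * PI) i = u t i) /\
      (* symmetry at least H^phi *)
      (forall h : gT, h \in H -> forall t i,
         mv (rho h) (u (t - 2 * PI * phi h)) i = u t i) /\
      (* ||u||_C = s *)
      is_lub (fun x => exists t, x = vnorm (u t)) s /\
      (* beta u' = A(alpha) u + mu f(alpha, u) *)
      (forall t i, b * u' t i = mv (A a) (u t) i + mu * f a (u t) i).
Proof.
  intros [u [u' [Hder [Hcont [Hper [Hsym [Hlub Hode]]]]]]].
  assert (Ha : am <= a <= ap) by exact (closure2_strip am ap D a b HP3sub (proj1 Hab)).
  destruct (HP5 a b Hab) as [K [HK0 [HKl [Ssum [HS HN]]]]].
  set (M := Nf a * s).
  assert (HM : 0 <= M) by (apply Rmult_le_pos; [apply HP4N | ]; lra).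
  assert (Hres : forall t, vnorm (residual (A a) b u u' t) <= M).
  { intros t. rewrite (vnorm_ext _ (residual (A a) b u u' t) (fun i => mu * f a (u t) i)); last first.
    { intros i. unfold residual. rewrite Hode. ring. }
    apply (vnorm_scal_growth_le _ _ _ r Rb); auto.
    apply (proj1 Hlub). by exists t. }
  assert (Hcoef : forall j, cnorm (fourier_coef u j) <= K j * cnorm (fourier_coef (residual (A a) b u u') j)).
  { intros [|l].
    { rewrite cnorm_fourier_coef_0 (cnorm_fourier_coef_residual_0 _ _ _ _ _ Hder Hcont Hper).
      apply (proj1 (proj2 HK0)). intros h Hh i.
      exact (fourier_coef_0_fixed _ _ (phi h) u (Rcont_solution _ _ _ Hder) Hper (Hsym h Hh) i). }
    rewrite (cnorm_fourier_coef_residual _ _ _ _ _ Hder Hcont Hper).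
    apply (proj1 (proj2 (HKl l.+1 isT))). intros h Hh.
    exact (fourier_coef_twisted _ _ (phi h) u (Rcont_solution _ _ _ Hder) Hper (Hsym h Hh) l.+1). }
  assert (HKpos : forall j, 0 <= K j) by (intros [|l]; [apply HK0 | apply (HKl l.+1 isT)]).
  pose proof (solution_sup_bound _ _ _ _ _ Hder Hcont Hper K Ssum M HKpos Hcoef HS HM Hres) as Hsup.
  assert (Hs_le : s <= sqrt 2 * sqrt Ssum * M) by (apply (proj2 Hlub); intros y [t ->]; apply Hsup).
  assert (sqrt 2 <= sqrt (2 * PI)) by (apply sqrt_le_1_alt; pose proof PI2_1; lra).
  assert (Nf a * (sqrt 2 * sqrt Ssum) < 1).
  { eapply Rle_lt_trans; [|exact HN]. apply Rmult_le_compat_l; [apply HP4N; auto|].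
    apply Rmult_le_compat_r; [apply sqrt_pos | auto]. }
  unfold M in Hs_le. nra.
Qed.
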